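(* Let $k\ge1$, let $\mathbf{T}_1,\dots,\mathbf{T}_k$ be finite trees, and let $A$ be a permutation (a bijective FDS). Then $C_k(\mathbf{T}_1,\dots,\mathbf{T}_k)\times A=(C_kA)(\mathbf{T}_1,\dots,\mathbf{T}_k)$.
   Context: A finite dynamical system (FDS) is a function $A:S_A\to S_A$ on a finite set, considered up to isomorphism of functional graphs (arcs $x\to A(x)$). The product $AB$ acts on $S_A\times S_B$ by $(a,b)\mapsto(A(a),B(b))$. $C_n$ is the FDS whose functional graph is a directed cycle of length $n$. A (finite) tree is a rooted in-tree: an acyclic weakly connected digraph with a root having no outgoing arc, every other vertex having one outgoing arc towards the root. For a permutation $B$ all of whose cycle lengths are multiples of $k$ and trees $\mathbf{T}_1,\dots,\mathbf{T}_k$, $B(\mathbf{T}_1,\dots,\mathbf{T}_k)$ denotes the FDS obtained by traversing each cycle of $B$ following the arrows from some starting state and, for the $i$-th state encountered ($i=1,2,\dots$), attaching a copy of $\mathbf{T}_{((i-1)\bmod k)+1}$ by identifying its root with that state (the tree's arcs keep pointing towards the root). Note that every cycle length of $C_kA$ is a multiple of $k$. *)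

From mathcomp Require Import all_boot.
Set Implicit Arguments.

Unset Strict Implicit.
Unset Printing Implicit Defensive.

Record fds := FDS { fS : finType; fmap : fS -> fS }.

Definition fds_iso (A B : fds) : Prop :=
  exists h : fS A -> fS B, bijective h /\ forall x, h (@fmap A x) = @fmap B (h x).

Definition fds_prod (A B : fds) : fds :=
  @FDS (fS A * fS B)%type (fun p => (@fmap A p.1, @fmap B p.2)).

Definition cycleC (k : nat) : fds := @FDS 'I_k (@ordS k).

Definition permutation (A : fds) : Prop := bijective (@fmap A).

(* A finite rooted in-tree: vertex set tV, root troot, and arcs v -> tpar v
   for v <> troot (tpar troot = troot is a harmless convention: the root
   has no outgoing arc). *)
Record tree := Tree {
  tV : finType;
  troot : tV;
  tpar : tV -> tV;
  troot_fix : tpar troot = troot;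
  treach : forall v, exists n, iter n tpar v = troot }.

(* A "traversal labelling" of a permutation B: the position mod k of each
   state along its cycle, starting from some chosen starting state of each
   cycle; i.e. the starting state has label 0 and following an arrow adds 1
   mod k.  Such labellings are exactly the choices of starting states when
   all cycle lengths are multiples of k. *)
Definition trav_labeling (k : nat) (B : fds) (lab : fS B -> 'I_k) : Prop :=
  forall x, lab (@fmap B x) = ordS (lab x).

(* B(T_1,...,T_k) w.r.t. a traversal labelling lab: at each state x of B a
   copy of T_(lab x) is attached by identifying its root with x. *)
Definition attach (k : nat) (B : fds) (T : 'I_k -> tree) (lab : fS B -> 'I_k)
  : fds :=
  @FDS {x : fS B & tV (T (lab x))}
    (fun p => let: existT x v := p in
       if v == troot (T (lab x))
       then existT (fun y => tV (T (lab y))) (@fmap B x) (troot (T (lab (@fmap B x))))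
       else existT (fun y => tV (T (lab y))) x (tpar v)).

Arguments trav_labeling : clear implicits.
Arguments attach : clear implicits.

From mathcomp Require Import all_boot.

Set Implicit Arguments.
Unset Strict Implicit.
Unset Printing Implicit Defensive.

(* A state (x, v, a) of C_k(T_1..T_k) x A, with v at depth d in its tree,
   reaches the cycle after d steps, while its A-coordinate moves d steps
   ahead; so (x, v, a) |-> ((x, A^d a), v) identifies the product with
   (C_k A)(T_1..T_k) for the labelling inherited from the first factor.
   Since C_k A is a permutation, any two traversal labellings of it differ,
   on each cycle, by a constant shift along the cycle, and shifting each
   cycle by that amount is an automorphism of C_k A carrying one
   labelling to the other. *)

Lemma fds_iso_trans (X Y Z : fds) : fds_iso X Y -> fds_iso Y Z -> fds_iso X Z.
Proof.
case=> f [bf cf] [g [bg cg]]; exists (g \o f); split; first exact: bij_comp.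
by move=> x /=; rewrite cf cg.
Qed.

Lemma iter_can (X : Type) (f g : X -> X) :
  cancel f g -> forall n, cancel (iter n f) (iter n g).
Proof. by move=> fK; elim=> [|n IH] x //; rewrite iterSr iterS fK IH. Qed.

Lemma permutation_prod (A B : fds) :
  permutation A -> permutation B -> permutation (fds_prod A B).
Proof.
case=> fA fAK fKA [fB fBK fKB].
by exists (fun p => (fA p.1, fB p.2)) => -[a b] /=; rewrite ?fAK ?fBK ?fKA ?fKB.
Qed.

Lemma permutation_cycleC (k : nat) : permutation (cycleC k).
Proof. exact: ordS_bij. Qed.

Section Depth.
Variable t : tree.

Lemma tree_reach_root (v : tV t) : exists n, iter n (@tpar t) v == troot t.
Proof. by case: (treach v) => n hn; exists n; apply/eqP. Qed.

Definition depth (v : tV t) : nat := ex_minn (tree_reach_root v).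

Lemma depth_root : depth (troot t) = 0.
Proof.
rewrite /depth; case: ex_minnP => m _ /(_ 0); rewrite /= eqxx => /(_ isT).
by rewrite leqn0 => /eqP.
Qed.

Lemma depth_tpar (v : tV t) : v != troot t -> depth v = (depth (tpar v)).+1.
Proof.
move=> v_nroot; rewrite /depth; case: ex_minnP => -[|m] v_m v_min.
  by rewrite /= (negbTE v_nroot) in v_m.
case: ex_minnP => m' pv_m' pv_min; rewrite iterSr in v_m.
have : iter m'.+1 (@tpar t) v == troot t by rewrite iterSr.
by move/v_min => le_m; apply/eqP; rewrite eqn_leq le_m ltnS pv_min.
Qed.

End Depth.

Section TreeCast.
Variables (k : nat) (T : 'I_k -> tree).

Definition tcast (i j : 'I_k) (e : i = j) (v : tV (T i)) : tV (T j) :=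
  match e in _ = j return tV (T j) with erefl => v end.

Lemma tcast_root i j (e : i = j) : tcast e (troot (T i)) = troot (T j).
Proof. by case: j / e. Qed.

Lemma tcast_tpar i j (e : i = j) v : tcast e (tpar v) = tpar (tcast e v).
Proof. by case: j / e. Qed.

Lemma tcast_eq_root i j (e : i = j) v :
  (tcast e v == troot (T j)) = (v == troot (T i)).
Proof. by case: j / e. Qed.

Lemma tcast_id i (e : i = i) v : tcast e v = v.
Proof. by rewrite (eq_irrelevance e erefl). Qed.

Lemma tcast_comp i j m (e : i = j) (e' : j = m) v :
  tcast e' (tcast e v) = tcast (etrans e e') v.
Proof. by case: m / e'. Qed.

Lemma existT_tcast (X : Type) (l : X -> 'I_k) x x' (ex : x' = x)
    (w : tV (T (l x'))) (v : tV (T (l x))) :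
  tcast (f_equal l ex) w = v ->
  existT (fun y => tV (T (l y))) x' w = existT _ x v.
Proof. by move: v; case: x / ex => v /= <-. Qed.

End TreeCast.

Lemma attach_conj_iso k (B : fds) (T : 'I_k -> tree) (lab lab' : fS B -> 'I_k)
    (psi : fS B -> fS B) :
  bijective psi -> (forall x, psi (@fmap B x) = @fmap B (psi x)) ->
  (forall x, lab' (psi x) = lab x) ->
  fds_iso (attach k B T lab) (attach k B T lab').
Proof.
move=> [psi' psiK psi'K] psi_fmap lab'_psi.
have E x : lab x = lab' (psi x) by rewrite lab'_psi.
have E' y : lab' y = lab (psi' y) by rewrite -[in LHS](psi'K y) lab'_psi.
exists (fun p => let: existT x v := p in
  existT (fun y => tV (T (lab' y))) (psi x) (tcast (E x) v)).
split.
  exists (fun p => let: existT y w := p in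
    existT (fun x => tV (T (lab x))) (psi' y) (tcast (E' y) w)).
  - case=> x v; apply: (@existT_tcast _ T _ lab _ _ (psiK x)).
    by rewrite !tcast_comp tcast_id.
  - case=> y w; apply: (@existT_tcast _ T _ lab' _ _ (psi'K y)).
    by rewrite !tcast_comp tcast_id.
case=> x v /=; rewrite tcast_eq_root; case: ifP => _ /=.
  by rewrite tcast_root psi_fmap.
by rewrite tcast_tpar.
Qed.

Lemma prod_attach_iso k (B A : fds) (T : 'I_k -> tree) (lab : fS B -> 'I_k) :
  permutation A ->
  fds_iso (fds_prod (attach k B T lab) A)
          (attach k (fds_prod B A) T (fun y : fS B * fS A => lab y.1)).
Proof.
case=> fA' fAK fKA.
exists (fun p : fS (fds_prod (attach k B T lab) A) =>
  let: (existT x v, a) := p in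
  existT (fun y : fS B * fS A => tV (T (lab y.1)))
    (x, iter (depth v) (@fmap A) a) v).
split.
  exists (fun p : {y : fS B * fS A & tV (T (lab y.1))} =>
    (existT (fun x => tV (T (lab x))) (projT1 p).1 (projT2 p),
     iter (depth (projT2 p)) fA' (projT1 p).2)).
    by case=> [[x v] a] /=; rewrite iter_can.
  by case=> [[x b] w] /=; rewrite (iter_can fKA).
case=> [[x v] a] /=; case: eqP => [->|/eqP v_nroot] /=.
  by rewrite !depth_root.
by rewrite (depth_tpar v_nroot) iterSr.
Qed.

Lemma trav_labeling_fst k (B A : fds) (lab : fS B -> 'I_k) :
  trav_labeling k B lab ->
  trav_labeling k (fds_prod B A) (fun y : fS B * fS A => lab y.1).
Proof. by move=> lab_fmap y; apply: lab_fmap. Qed.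

Lemma trav_labeling_iter k (B : fds) (lab : fS B -> 'I_k) :
  trav_labeling k B lab ->
  forall n x, val (lab (iter n (@fmap B) x)) = (lab x + n) %% k.
Proof.
move=> labP; elim=> [|n IH] x; first by rewrite addn0 modn_small.
by rewrite iterS labP /= IH addnS -addn1 modnDml addn1.
Qed.

Section TravLabelings.
Variables (k : nat) (B : fds) (lab lab' : fS B -> 'I_k).
Hypotheses (labP : trav_labeling k B lab) (lab'P : trav_labeling k B lab').
Local Notation f := (@fmap B).

Definition label_offset (x : fS B) : nat := (lab x + k - lab' x) %% k.

Lemma label_offsetP x : (lab' x + label_offset x) %% k = lab x.
Proof.
have lab'_le : lab' x <= lab x + k by rewrite ltnW // ltn_addl.
by rewrite modnDmr subnKC // modnDr modn_small.
Qed.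

Lemma label_offset_lt x : label_offset x < k.
Proof. by rewrite ltn_pmod // (leq_ltn_trans _ (ltn_ord (lab x))). Qed.

Lemma label_offset_fmap x : label_offset (f x) = label_offset x.
Proof.
apply/eqP; rewrite -(modn_small (label_offset_lt _)).
rewrite -(modn_small (label_offset_lt x)).
rewrite -(eqn_modDl (lab' (f x))) label_offsetP (trav_labeling_iter lab'P 1).
by rewrite modnDml addnAC -modnDml label_offsetP -(trav_labeling_iter labP 1).
Qed.

Lemma label_offset_iter n x : label_offset (iter n f x) = label_offset x.
Proof. by elim: n => [|n IH] //; rewrite iterS label_offset_fmap IH. Qed.

Lemma attach_trav_labeling_iso (T : 'I_k -> tree) :
  permutation B -> fds_iso (attach k B T lab) (attach k B T lab').
Proof.
case=> f' fK fK'.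
pose psi x := iter (label_offset x) f x.
have offset_psi x : label_offset (psi x) = label_offset x.
  exact: label_offset_iter.
apply: (@attach_conj_iso k B T lab lab' psi).
- apply: injF_bij => x y eq_psi.
  have eq_off : label_offset x = label_offset y.
    by rewrite -offset_psi eq_psi offset_psi.
  by move: eq_psi; rewrite /psi eq_off => /(can_inj (iter_can fK _)).
- by move=> x; rewrite /psi label_offset_fmap -iterSr.
- move=> x; apply: val_inj.
  by rewrite /psi (trav_labeling_iter lab'P) label_offsetP.
Qed.

End TravLabelings.

Theorem mainTheorem9 (k : nat) (hk : 0 < k) (T : 'I_k -> tree) (A : fds)
  (hA : permutation A)
  (lab1 : fS (cycleC k) -> 'I_k) (h1 : trav_labeling k (cycleC k) lab1)
  (lab2 : fS (fds_prod (cycleC k) A) -> 'I_k)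
  (h2 : trav_labeling k (fds_prod (cycleC k) A) lab2) :
  fds_iso (fds_prod (attach k (cycleC k) T lab1) A)
          (attach k (fds_prod (cycleC k) A) T lab2).
Proof.
apply: fds_iso_trans (prod_attach_iso T lab1 hA) _.
apply: (attach_trav_labeling_iso (trav_labeling_fst (A := A) h1) h2).
exact: permutation_prod (permutation_cycleC k) hA.
Qed.
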